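(* For every integer $n\geq 5$, there is a graph homomorphism $h: M(G_{n-1}) \to G_n$. In particular, $\chi(G_n)\geq n-2$.
   Context: Let $[n]=\{1,\dots,n\}$. A $2$-subset $\{a,b\}$ of $[n]$ with $a<b$ is called stable if $b \neq a+1$ and $\{a,b\}\neq\{1,n\}$; it is written $ab$. For $n\ge 4$, the graph $G_n$ has as vertex set all stable $2$-subsets of $[n]$; two vertices $ab$ ($a<b$) and $cd$ ($c<d$) with $a<c$ are adjacent iff $\{a,b\}\cap\{c,d\}=\emptyset$ and either $a<c<b<d$, or $1<a<c<d<b$. For a graph $G=(V,E)$, the Mycielskian $M(G)$ has vertex set $V\cup\{\bar u : u\in V\}\cup\{*\}$ (with $\bar u$ new vertices called clones and $*$ a new vertex), and edges $\{u,v\}$ and $\{u,\bar v\}$ for every $\{u,v\}\in E$, and $\{\bar u,*\}$ for every $u\in V$. A homomorphism is a map on vertices sending edges to edges. $\chi$ denotes chromatic number. *)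

From mathcomp Require Import all_boot.
Set Implicit Arguments. Unset Strict Implicit. Unset Printing Implicit Defensive.

(* Stable 2-subsets {a,b} of [n] = {1..n}, a < b, encoded as pairs (a,b) of
   'I_n.+1 (so values 0..n; the condition 1 <= a excludes 0). *)
Definition stable (n : nat) (p : 'I_n.+1 * 'I_n.+1) : bool :=
  let a := val p.1 in let b := val p.2 in
  [&& 1 <= a, a < b, b <= n, b != a.+1 & ~~ ((a == 1) && (b == n))].

Definition Vtx (n : nat) := {p : 'I_n.+1 * 'I_n.+1 | @stable n p}.

Definition crossing (a b c d : nat) : bool :=
  [&& a < c, [&& a != c, a != d, b != c & b != d] &
     ((c < b) && (b < d)) || [&& 1 < a, c < d & d < b]].

Arguments stable : clear implicits.
Definition adjG (n : nat) : rel (Vtx n) := fun u v =>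
  let a := val (val u).1 in let b := val (val u).2 in
  let c := val (val v).1 in let d := val (val v).2 in
  crossing a b c d || crossing c d a b.

(* Mycielskian: vertices  inl (inl u) = u,  inl (inr u) = clone of u,  inr tt = * *)
Definition myc_vtx (V : Type) := ((V + V) + unit)%type.

Definition mycE (V : finType) (e : rel V) : rel (myc_vtx V) := fun x y =>
  match x, y with
  | inl (inl u), inl (inl v) => e u v
  | inl (inl u), inl (inr v) => e u v
  | inl (inr u), inl (inl v) => e u v
  | inl (inr _), inr _ => true
  | inr _, inl (inr _) => true
  | _, _ => false
  end.

Definition hom (V W : Type) (e : rel V) (f : rel W) (h : V -> W) : Prop :=
  forall x y, e x y -> f (h x) (h y).

Definition colorable (V : finType) (e : rel V) (k : nat) : bool :=
  [exists c : {ffun V -> 'I_k}, [forall x, forall y, e x y ==> (c x != c y)]].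

Lemma colorable_ex (V : finType) (e : rel V) :
  irreflexive e -> exists k, colorable e k.
Proof.
move=> irr; exists #|V|; apply/existsP; exists [ffun x => enum_rank x].
apply/forallP => x; apply/forallP => y; apply/implyP => exy; rewrite !ffunE.
apply/negP => /eqP /enum_rank_inj exy'; by rewrite exy' irr in exy.
Qed.

Definition chi (V : finType) (e : rel V) (irr : irreflexive e) : nat :=
  ex_minn (colorable_ex irr).

Lemma adjG_irr (n : nat) : irreflexive (@adjG n).
Proof. by move=> u; rewrite /adjG /crossing ltnn. Qed.
Arguments adjG : clear implicits. Arguments adjG_irr : clear implicits.

From mathcomp Require Import all_boot.
From mathcomp Require Import zify.
Set Implicit Arguments. Unset Strict Implicit. Unset Printing Implicit Defensive.

(* Send a vertex ab of G_(n-1) to ab, its clone to {a, n} (or to {b, n} when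
   a = 1, since {1, n} is not stable), and the apex * to {1, n-1}.  Since n lies
   beyond every endpoint of G_(n-1), every chord adjacent to ab is adjacent to
   the clone chord, and every clone chord crosses {1, n-1}, so this is a
   homomorphism M(G_(n-1)) -> G_n.  A (k+1)-coloring of M(G) yields a
   k-coloring of G (recolor each vertex colored like the apex with the color of
   its clone), so chi(G_n) >= chi(G_(n-1)) + 1, and chi(G_4) >= 2 because
   {1,3} and {2,4} are adjacent. *)

Definition proper_coloring (V : finType) (e : rel V) k (c : V -> 'I_k) :=
  forall x y, e x y -> c x != c y.

Lemma colorableP (V : finType) (e : rel V) k :
  reflect (exists c : V -> 'I_k, proper_coloring e c) (colorable e k).
Proof.
apply: (iffP existsP) => [[c /forallP c_proper]|[c c_proper]].
  by exists c => x y exy; exact: implyP (forallP (c_proper x) y) exy.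
exists [ffun x => c x]; apply/forallP => x; apply/forallP => y.
by apply/implyP => exy; rewrite !ffunE; exact: c_proper.
Qed.
Arguments colorableP {V e k}.

Lemma colorable_hom (V W : finType) (e : rel V) (f : rel W) (h : V -> W) k :
  hom e f h -> colorable f k -> colorable e k.
Proof.
move=> h_hom /colorableP [c c_proper]; apply/colorableP.
by exists (c \o h) => x y exy; exact/c_proper/h_hom.
Qed.

Section Colorings.

Variables (V : finType) (e : rel V).

Lemma colorable_edge k x y : e x y -> colorable e k -> 1 < k.
Proof.
move=> exy /colorableP [c /(_ x y exy)].
by case: (c x) (c y) => [i i_lt] [j j_lt]; rewrite -val_eqE /=; lia.
Qed.

Lemma colorable_avoid k (c : V -> 'I_k.+1) (alpha : 'I_k.+1) :
  proper_coloring e c -> (forall x, alpha != c x) -> colorable e k.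
Proof.
move=> c_proper c_avoid; apply/colorableP.
exists (fun x => sval (unlift_some (c_avoid x))) => x y exy.
case: (unlift_some (c_avoid x)) (unlift_some (c_avoid y)) => [i cx _] [j cy _] /=.
by apply: contraNneq (c_proper x y exy) => eq_ij; rewrite cx cy eq_ij.
Qed.

Lemma colorable_myc k : colorable (mycE e) k.+1 -> colorable e k.
Proof.
move=> /colorableP [c c_proper].
pose alpha := c (inr tt).
pose c' x := if c (inl (inl x)) == alpha then c (inl (inr x)) else c (inl (inl x)).
apply: (@colorable_avoid _ c' alpha) => [x y exy|x].
  have old_old : c (inl (inl x)) != c (inl (inl y)) by exact: c_proper.
  rewrite /c'; have [cx|_] := eqVneq (c (inl (inl x))) alpha;
    have [cy|_] := eqVneq (c (inl (inl y))) alpha => //.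
  - by rewrite cx cy eqxx in old_old.
  - exact: c_proper.
  - exact: c_proper.
rewrite /c' eq_sym; have [_|//] := eqVneq (c (inl (inl x))) alpha.
exact: c_proper.
Qed.

End Colorings.

Lemma colorable_myc_hom (V W : finType) (e : rel V) (f : rel W)
    (h : myc_vtx V -> W) k :
  hom (mycE e) f h -> colorable f k.+1 -> colorable e k.
Proof. by move=> h_hom /(colorable_hom h_hom); exact: colorable_myc. Qed.

Definition stable_ends n a b :=
  [&& 1 <= a, a < b, b <= n, b != a.+1 & ~~ ((a == 1) && (b == n))].

Definition adj_ends a b c d := crossing a b c d || crossing c d a b.

Lemma adj_endsC a b c d : adj_ends a b c d = adj_ends c d a b.
Proof. exact: orbC. Qed.

Definition clone_end a b := if a == 1 then b else a.

Lemma stable_ends_widen m a b : stable_ends m a b -> stable_ends m.+1 a b.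
Proof. rewrite /stable_ends; lia. Qed.

Lemma stable_ends_clone m a b :
  stable_ends m a b -> stable_ends m.+1 (clone_end a b) m.+1.
Proof. rewrite /stable_ends /clone_end; have [->|] := eqVneq a 1; lia. Qed.

Lemma stable_ends_apex m : 4 <= m -> stable_ends m.+1 1 m.
Proof. rewrite /stable_ends; lia. Qed.

Lemma adj_ends_clone m a b c d : stable_ends m a b -> stable_ends m c d ->
  adj_ends a b c d -> adj_ends a b (clone_end c d) m.+1.
Proof.
rewrite /stable_ends /adj_ends /crossing /clone_end; have [->|] := eqVneq c 1; lia.
Qed.

Lemma adj_ends_clone_apex m c d : 4 <= m -> stable_ends m c d ->
  adj_ends (clone_end c d) m.+1 1 m.
Proof.
rewrite /stable_ends /adj_ends /crossing /clone_end; have [->|] := eqVneq c 1; lia.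
Qed.

Section Vertices.

Variable n : nat.

Definition lo (u : Vtx n) : nat := val (val u).1.
Definition hi (u : Vtx n) : nat := val (val u).2.

Lemma stable_ends_vtx (u : Vtx n) : stable_ends n (lo u) (hi u).
Proof. exact: valP u. Qed.

Lemma stable_ends_le a b : stable_ends n a b -> a <= n /\ b <= n.
Proof. rewrite /stable_ends; lia. Qed.

Lemma stable_inord a b : stable_ends n a b -> stable n (inord a, inord b).
Proof. by move=> s; have [a_le b_le] := stable_ends_le s; rewrite /stable /= !inordK. Qed.

Definition mk_vtx a b (s : stable_ends n a b) : Vtx n :=
  exist (stable n) _ (stable_inord s).

Lemma adjG_mk_vtx a b c d (s : stable_ends n a b) (t : stable_ends n c d) :
  adjG n (mk_vtx s) (mk_vtx t) = adj_ends a b c d.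
Proof.
have [a_le b_le] := stable_ends_le s; have [c_le d_le] := stable_ends_le t.
by rewrite /adjG /= !inordK.
Qed.

Lemma adjG_edge : 4 <= n -> exists u v : Vtx n, adjG n u v.
Proof.
move=> n_ge4.
have s13 : stable_ends n 1 3 by rewrite /stable_ends; lia.
have s24 : stable_ends n 2 4 by rewrite /stable_ends; lia.
by exists (mk_vtx s13), (mk_vtx s24); rewrite adjG_mk_vtx.
Qed.

End Vertices.

Section MycielskiEmbedding.

Variables (m : nat) (m_ge4 : 4 <= m).

Definition myc_embed (x : myc_vtx (Vtx m)) : Vtx m.+1 :=
  match x with
  | inl (inl u) => mk_vtx (stable_ends_widen (stable_ends_vtx u))
  | inl (inr u) => mk_vtx (stable_ends_clone (stable_ends_vtx u))
  | inr _ => mk_vtx (stable_ends_apex m_ge4)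
  end.

Lemma myc_embed_hom : hom (mycE (adjG m)) (adjG m.+1) myc_embed.
Proof.
move=> [[u|u]|[]] [[v|v]|[]] //= uv; rewrite adjG_mk_vtx //.
- exact: adj_ends_clone (stable_ends_vtx u) (stable_ends_vtx v) uv.
- rewrite adj_endsC; apply: adj_ends_clone (stable_ends_vtx v) (stable_ends_vtx u) _.
  by rewrite adj_endsC.
- exact: adj_ends_clone_apex m_ge4 (stable_ends_vtx u).
- by rewrite adj_endsC; exact: adj_ends_clone_apex m_ge4 (stable_ends_vtx v).
Qed.

End MycielskiEmbedding.

Lemma colorable_adjG n k : 4 <= n -> colorable (adjG n) k -> n - 2 <= k.
Proof.
elim: n k => [//|n IH] k Sn_ge4 col.
have [u [v uv]] := adjG_edge Sn_ge4.
have k_gt1 := colorable_edge uv col.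
case: (ltnP n 4) => [n_lt4|n_ge4]; first lia.
case: k k_gt1 col => [//|k] _ col.
have := IH k n_ge4 (colorable_myc_hom (myc_embed_hom n_ge4) col); lia.
Qed.

Theorem lemma3 (n : nat) (hn : 5 <= n) :
  (exists h : myc_vtx (Vtx n.-1) -> Vtx n,
      hom (mycE (adjG n.-1)) (adjG n) h)
  /\ n - 2 <= chi (adjG_irr n).
Proof.
case: n hn => [//|m] m_ge4; split.
  by exists (myc_embed m_ge4); exact: myc_embed_hom.
rewrite /chi; case: ex_minnP => k k_col _.
exact: colorable_adjG (ltnW m_ge4) k_col.
Qed.
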